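(* Let $0<p\leqslant q:=1-p$, and let $\tilde f(z)$ and $\tilde g(z)$ be entire functions satisfying \[ \tilde{f}(z)=(1-e^{-pz})\tilde{f}(pz) +e^{-pz}\tilde{f}(qz) +\tilde{g}(z), \] with $\tilde f(0)=\tilde g(0)=0$. If $\tilde g(x)=O(x^\alpha(\log_+x)^\beta)$ for real $x\to\infty$, where $\alpha,\beta\in\mathbb{R}$ and $\log_+x:=\log(1+x)$, then, as $x\to\infty$ along the reals, \[ \tilde{f}(x) = \begin{cases} O(x^{\alpha}(\log_+x)^\beta), & \text{if }\alpha>0;\\ O((\log_+x)^{\beta+1}), & \text{if }\alpha=0,\ \beta>-1;\\ O(\log_+ \log_+ x), & \text{if }\alpha=0,\ \beta=-1;\\ O(1), &\text{if }\alpha=0,\ \beta<-1;\\ O(1), &\text{if } \alpha<0. \end{cases} \] *)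

From Stdlib Require Import Reals.
From Coquelicot Require Import Coquelicot.
Open Scope R_scope.

Definition Cexp (z : C) : C :=
  (exp (Re z) * cos (Im z), exp (Re z) * sin (Im z)).

Definition entire (f : C -> C) : Prop :=
  forall z : C, @ex_derive C_AbsRing C_NormedModule f z.

Definition log_plus (x : R) : R := ln (1 + x).

Definition bigO_pinfty (u v : R -> R) : Prop :=
  exists K M : R, forall x : R, M <= x -> Rabs (u x) <= K * Rabs (v x).

From Stdlib Require Import Reals Lra.
From Coquelicot Require Import Coquelicot.
Open Scope R_scope.

(* On the positive reals, F(x) := |f(x)| satisfies
     F(x) <= (1 - e^{-px}) F(px) + e^{-px} F(qx) + |g(x)|
   and is bounded on compacts.  If h >= 0 satisfies the reverse, strict form
     h(px) + e^{-px} h(qx) + r b(x) <= h(x)   for large x,  with |g| = O(b),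
   then F <= A + C h on [0, oo), by induction over the intervals q^n x <= x_1:
   the recurrence at x only involves the smaller points px <= qx.  It remains to
   find such a supersolution in each regime: x^a (log_+ x)^b itself when a > 0;
   (log_+ x)^(b+1), log_+ log_+ x and the bounded 1 - (1 + log_+ x)^(b+1) when
   a = 0; and the last one with b = -2 when a < 0, since then
   x^a (log_+ x)^b = O((log_+ x)^(-2)). *)

Lemma exp_le (x y : R) : x <= y -> exp x <= exp y.
Proof. intros [Hlt | ->]; [now apply Rlt_le, exp_increasing | lra]. Qed.

Lemma exp_sub_ge (x y : R) : exp x * (y - x) <= exp y - exp x.
Proof.
  replace y with (x + (y - x)) at 2 by ring.
  rewrite exp_plus. pose proof (exp_ineq1_le (y - x)). pose proof (exp_pos x). nra.
Qed.

Lemma ln_le_sub_1 (y : R) : 0 < y -> ln y <= y - 1.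
Proof. intros Hy. pose proof (exp_ineq1_le (ln y)) as H. rewrite exp_ln in H; lra. Qed.

Lemma ln_le_tangent (eps y : R) : 0 < eps -> 0 < y -> ln y <= eps * y - ln eps - 1.
Proof.
  intros He Hy. pose proof (ln_le_sub_1 (eps * y) ltac:(nra)) as H.
  rewrite ln_mult in H; lra.
Qed.

Lemma ln_sub_ge (a b : R) : 0 < a -> 0 < b -> (b - a) / b <= ln b - ln a.
Proof.
  intros Ha Hb. pose proof (ln_le_sub_1 (a / b) ltac:(now apply Rdiv_lt_0_compat)) as H.
  unfold Rdiv in *. rewrite ln_mult, ln_Rinv in H by (auto; now apply Rinv_0_lt_compat).
  replace ((b - a) * / b) with (1 - a * / b) by (field; lra). lra.
Qed.

Lemma Rpower_pos (x y : R) : 0 < Rpower x y.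
Proof. apply exp_pos. Qed.

Lemma Rpower_0_r (x : R) : Rpower x 0 = 1.
Proof. unfold Rpower. now rewrite Rmult_0_l, exp_0. Qed.

Lemma Rpower_1_l (y : R) : Rpower 1 y = 1.
Proof. unfold Rpower. now rewrite ln_1, Rmult_0_r, exp_0. Qed.

Lemma Rpower_sub_1 (u y : R) : 0 < u -> Rpower u (y - 1) = Rpower u y / u.
Proof.
  intros Hu. unfold Rminus. rewrite Rpower_plus, Rpower_Ropp, Rpower_1 by exact Hu.
  reflexivity.
Qed.

Lemma Rpower_mul_opp (x y : R) : Rpower x y * Rpower x (- y) = 1.
Proof. now rewrite <- Rpower_plus, Rplus_opp_r, Rpower_0_r. Qed.

Lemma one_le_Rpower (a y : R) : 1 <= a -> 0 <= y -> 1 <= Rpower a y.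
Proof. intros Ha Hy. rewrite <- (Rpower_1_l y). apply Rle_Rpower_l; lra. Qed.

Lemma Rpower_le_anti_l (a b c : R) : c <= 0 -> 0 < a <= b -> Rpower b c <= Rpower a c.
Proof.
  intros Hc Hab. apply exp_le. apply Rmult_le_compat_neg_l; [exact Hc|].
  apply ln_le; lra.
Qed.

Lemma Rpower_m1 (u : R) : 0 < u -> Rpower u (-1) = / u.
Proof.
  intros Hu. unfold Rpower. replace (-1 * ln u) with (- ln u) by ring.
  now rewrite exp_Ropp, exp_ln.
Qed.

Lemma log_plus_nonneg (x : R) : 0 <= x -> 0 <= log_plus x.
Proof. intros Hx. unfold log_plus. rewrite <- ln_1. apply ln_le; lra. Qed.

Lemma log_plus_pos (x : R) : 0 < x -> 0 < log_plus x.
Proof. intros Hx. unfold log_plus. rewrite <- ln_1. apply ln_increasing; lra. Qed.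

Lemma log_plus_le (x y : R) : 0 <= x -> x <= y -> log_plus x <= log_plus y.
Proof. intros Hx Hxy. unfold log_plus. apply ln_le; lra. Qed.

Lemma log_plus_le_self (x : R) : 0 <= x -> log_plus x <= x.
Proof. intros Hx. unfold log_plus. pose proof (ln_le_sub_1 (1 + x)). lra. Qed.

Lemma log_plus_ge (T x : R) : exp T <= x -> T <= log_plus x.
Proof.
  intros Hx. rewrite <- (ln_exp T). unfold log_plus. pose proof (exp_pos T).
  apply ln_le; lra.
Qed.

Lemma log_plus_le_ln2_plus_ln (x : R) : 1 <= x -> log_plus x <= ln 2 + ln x.
Proof. intros Hx. unfold log_plus. rewrite <- ln_mult by lra. apply ln_le; lra. Qed.

Lemma log_plus_sub_scale_ge (p x : R) : 0 < p < 1 -> 1 <= x ->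
  (1 - p) / 2 <= log_plus x - log_plus (p * x).
Proof.
  intros Hp Hx. unfold log_plus.
  eapply Rle_trans; [| apply ln_sub_ge; nra].
  apply Rmult_le_reg_r with (2 * (1 + x)); [lra|].
  replace ((1 + x - (1 + p * x)) / (1 + x) * (2 * (1 + x))) with (2 * (1 - p) * x)
    by (field; lra).
  nra.
Qed.

Lemma log_plus_sub_scale_le (c x : R) : 0 < c <= 1 -> 0 <= x ->
  log_plus x - log_plus (c * x) <= - ln c.
Proof.
  intros Hc Hx. unfold log_plus.
  assert (H : ln (1 + x) <= ln ((1 + c * x) * / c)).
  { apply ln_le; [lra|]. apply Rmult_le_reg_l with c; [lra|].
    replace (c * ((1 + c * x) * / c)) with (1 + c * x) by (field; lra). nra. }
  rewrite ln_mult, ln_Rinv in H; try lra; try nra. now apply Rinv_0_lt_compat.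
Qed.

Lemma exp_mul_Rpower_log_plus_small (p s eps : R) : 0 < p -> 0 <= s -> 0 < eps ->
  exists X, forall x, X <= x -> exp (- (p * x)) * Rpower (log_plus x) s <= eps.
Proof.
  intros Hp Hs He.
  set (k := p / (2 * (s + 1))).
  assert (Hk : 0 < k) by (apply Rdiv_lt_0_compat; lra).
  assert (Hsk : s * k <= p / 2).
  { replace (s * k) with (p / 2 - p / (2 * (s + 1))) by (unfold k; field; lra).
    pose proof (Rdiv_lt_0_compat p (2 * (s + 1)) Hp ltac:(lra)). lra. }
  set (c := s * Rabs (ln k + 1)).
  exists (Rmax 1 (2 * (c - ln eps) / p)). intros x Hx.
  pose proof (Rle_trans _ _ _ (Rmax_l _ _) Hx) as Hx1.
  pose proof (Rle_trans _ _ _ (Rmax_r _ _) Hx) as Hx2.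
  assert (HL : 0 < log_plus x) by (apply log_plus_pos; lra).
  assert (HLx : log_plus x <= x) by (apply log_plus_le_self; lra).
  assert (Hln : s * ln (log_plus x) <= p * x / 2 + c).
  { pose proof (ln_le_tangent k (log_plus x) Hk HL) as Ht.
    apply Rmult_le_compat_l with (r := s) in Ht; [|exact Hs].
    assert (s * k * log_plus x <= p / 2 * x).
    { apply Rmult_le_compat; nra. }
    assert (- (ln k + 1) * s <= Rabs (ln k + 1) * s).
    { apply Rmult_le_compat_r; [exact Hs|].
      rewrite <- Rabs_Ropp. apply Rle_abs. }
    unfold c. nra. }
  assert (Hpx : 2 * (c - ln eps) <= p * x).
  { apply Rmult_le_compat_l with (r := p) in Hx2; [|lra].
    replace (p * (2 * (c - ln eps) / p)) with (2 * (c - ln eps)) in Hx2 by (field; lra).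
    exact Hx2. }
  unfold Rpower. rewrite <- exp_plus, <- (exp_ln eps) by exact He.
  apply exp_le. lra.
Qed.

Lemma Rpower_log_plus_le_Rpower (a b : R) : 0 < a ->
  exists X, forall x, X <= x -> Rpower (log_plus x) b <= Rpower x a.
Proof.
  intros Ha.
  set (B := Rabs b + 1).
  assert (HB : 1 <= B) by (unfold B; pose proof (Rabs_pos b); lra).
  set (k := a / (2 * B)).
  assert (Hk : 0 < k) by (apply Rdiv_lt_0_compat; lra).
  assert (HBk : B * k = a / 2) by (unfold k; field; lra).
  set (C := a / 2 * ln 2 - B * (ln k + 1)).
  exists (Rmax (exp 1) (exp (2 * C / a))). intros x Hx.
  pose proof (Rle_trans _ _ _ (Rmax_l _ _) Hx) as Hxe.
  pose proof (Rle_trans _ _ _ (Rmax_r _ _) Hx) as HxC.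
  assert (Hx1 : 1 <= x) by (pose proof (exp_ineq1_le 1); lra).
  assert (HL1 : 1 <= log_plus x) by (now apply log_plus_ge).
  assert (HlnL : 0 <= ln (log_plus x)) by (rewrite <- ln_1; apply ln_le; lra).
  assert (Hlnx : 2 * C / a <= ln x).
  { rewrite <- (ln_exp (2 * C / a)). apply ln_le; [apply exp_pos | exact HxC]. }
  assert (HBln : B * ln (log_plus x) <= a / 2 * ln x + C).
  { pose proof (ln_le_tangent k (log_plus x) Hk ltac:(lra)) as Ht.
    pose proof (log_plus_le_ln2_plus_ln x Hx1).
    apply Rmult_le_compat_l with (r := B) in Ht; [|lra].
    unfold C. nra. }
  assert (HCa : C <= a / 2 * ln x).
  { apply Rmult_le_compat_l with (r := a / 2) in Hlnx; [|lra].
    replace (a / 2 * (2 * C / a)) with C in Hlnx by (field; lra). exact Hlnx. }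
  assert (Hb : b <= B) by (unfold B; pose proof (Rle_abs b); lra).
  apply exp_le. nra.
Qed.

Definition supersolution (p : R) (h b : R -> R) : Prop :=
  exists r X, 0 < r /\ forall x, X <= x ->
    h (p * x) + exp (- (p * x)) * h ((1 - p) * x) + r * b x <= h x.

(* Since [log_plus x - log_plus (p x) >= (1 - p) / 2], an increasing [phi] whose
   increments over steps of that length dominate [b] yields a supersolution
   [phi o log_plus]; the term with weight [exp (- p x)] is negligible. *)
Lemma log_plus_supersolution (p beta s c U0 : R) (phi : R -> R) :
  0 < p < 1 -> 0 <= s -> 0 < c ->
  (forall a b, 0 < a -> a <= b -> phi a <= phi b) ->
  (forall u, 1 <= u -> phi u <= Rpower u (s + beta)) ->
  (forall u, U0 <= u -> c * Rpower u beta <= phi u - phi (u - (1 - p) / 2)) ->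
  supersolution p (fun x => phi (log_plus x)) (fun x => Rpower (log_plus x) beta).
Proof.
  intros Hp Hs Hc Hmono Hgrowth Hgap.
  destruct (exp_mul_Rpower_log_plus_small p s (c / 2)) as [X HX]; try lra.
  exists (c / 2), (Rmax (exp (Rmax 1 U0)) X). split; [lra|]. intros x Hx.
  pose proof (Rle_trans _ _ _ (Rmax_l _ _) Hx) as Hxe.
  pose proof (Rle_trans _ _ _ (Rmax_r _ _) Hx) as HxX.
  pose proof (Rmax_l 1 U0). pose proof (Rmax_r 1 U0).
  assert (Hx1 : 1 <= x) by (pose proof (exp_ineq1_le (Rmax 1 U0)); lra).
  assert (Hu : Rmax 1 U0 <= log_plus x) by (now apply log_plus_ge).
  pose proof (log_plus_pos (p * x) ltac:(nra)).
  pose proof (log_plus_pos ((1 - p) * x) ltac:(nra)).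
  pose proof (log_plus_sub_scale_ge p x Hp Hx1).
  assert (log_plus ((1 - p) * x) <= log_plus x) by (apply log_plus_le; nra).
  set (u := log_plus x) in *.
  assert (Hpx : phi (log_plus (p * x)) <= phi (u - (1 - p) / 2)) by (apply Hmono; lra).
  assert (Hqx : exp (- (p * x)) * phi (log_plus ((1 - p) * x)) <= exp (- (p * x)) * phi u)
    by (apply Rmult_le_compat_l; [apply Rlt_le, exp_pos | apply Hmono; lra]).
  assert (Hsmall : exp (- (p * x)) * phi u <= c / 2 * Rpower u beta).
  { apply Rle_trans with (exp (- (p * x)) * (Rpower u s * Rpower u beta)).
    - apply Rmult_le_compat_l; [apply Rlt_le, exp_pos|].
      rewrite <- Rpower_plus. apply Hgrowth. lra.
    - rewrite <- Rmult_assoc. apply Rmult_le_compat_r; [apply Rlt_le, Rpower_pos|].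
      now apply HX. }
  pose proof (Hgap u ltac:(lra)). lra.
Qed.

Lemma Rpower_sub_shift_ge (gamma delta u : R) : 0 < gamma -> 0 < delta -> 2 * delta <= u ->
  gamma * delta * Rpower (/ 2) gamma * Rpower u (gamma - 1)
    <= Rpower u gamma - Rpower (u - delta) gamma.
Proof.
  intros Hg Hd Hu.
  pose proof (exp_sub_ge (gamma * ln (u - delta)) (gamma * ln u)) as Hexp.
  change (exp (gamma * ln u)) with (Rpower u gamma) in Hexp.
  change (exp (gamma * ln (u - delta))) with (Rpower (u - delta) gamma) in Hexp.
  pose proof (ln_sub_ge (u - delta) u ltac:(lra) ltac:(lra)) as Hln.
  replace (u - (u - delta)) with delta in Hln by ring.
  assert (Hhalf : Rpower (/ 2) gamma * Rpower u gamma <= Rpower (u - delta) gamma).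
  { rewrite Rpower_mult_distr by lra. apply Rle_Rpower_l; lra. }
  rewrite Rpower_sub_1 by lra.
  replace (gamma * delta * Rpower (/ 2) gamma * (Rpower u gamma / u))
    with (gamma * (delta / u) * (Rpower (/ 2) gamma * Rpower u gamma)) by (field; lra).
  apply Rle_trans with (gamma * (ln u - ln (u - delta)) * Rpower (u - delta) gamma); [|lra].
  apply Rmult_le_compat.
  - apply Rmult_le_pos; [lra|]. apply Rlt_le, Rdiv_lt_0_compat; lra.
  - apply Rmult_le_pos; apply Rlt_le, Rpower_pos.
  - apply Rmult_le_compat_l; lra.
  - exact Hhalf.
Qed.

Lemma Rpower_one_plus_shift_ge (gamma delta u : R) : gamma < 0 -> 0 < delta <= 1 -> 1 <= u ->
  - gamma * delta * Rpower 2 (gamma - 1) * Rpower u (gamma - 1)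
    <= Rpower (1 + (u - delta)) gamma - Rpower (1 + u) gamma.
Proof.
  intros Hg Hd Hu.
  pose proof (exp_sub_ge (gamma * ln (1 + u)) (gamma * ln (1 + (u - delta)))) as Hexp.
  change (exp (gamma * ln (1 + u))) with (Rpower (1 + u) gamma) in Hexp.
  change (exp (gamma * ln (1 + (u - delta)))) with (Rpower (1 + (u - delta)) gamma) in Hexp.
  pose proof (ln_sub_ge (1 + (u - delta)) (1 + u) ltac:(lra) ltac:(lra)) as Hln.
  replace (1 + u - (1 + (u - delta))) with delta in Hln by ring.
  assert (Htwo : Rpower 2 (gamma - 1) * Rpower u (gamma - 1) <= Rpower (1 + u) gamma / (1 + u)).
  { rewrite <- Rpower_sub_1, Rpower_mult_distr by lra.
    apply Rpower_le_anti_l; lra. }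
  apply Rle_trans with (- gamma * (delta / (1 + u)) * Rpower (1 + u) gamma).
  - replace (- gamma * (delta / (1 + u)) * Rpower (1 + u) gamma)
      with (- gamma * delta * (Rpower (1 + u) gamma / (1 + u))) by (field; lra).
    rewrite Rmult_assoc. apply Rmult_le_compat_l; [nra|]. exact Htwo.
  - apply Rle_trans with (- gamma * (ln (1 + u) - ln (1 + (u - delta))) * Rpower (1 + u) gamma);
      [|lra].
    apply Rmult_le_compat_r; [apply Rlt_le, Rpower_pos|].
    apply Rmult_le_compat_l; lra.
Qed.

Lemma log_plus_shift_ge (delta u : R) : 0 < delta <= 1 -> 1 <= u ->
  delta / 2 * Rpower u (-1) <= log_plus u - log_plus (u - delta).
Proof.
  intros Hd Hu. unfold log_plus.
  rewrite Rpower_m1 by lra.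
  eapply Rle_trans; [| apply ln_sub_ge; lra].
  replace (1 + u - (1 + (u - delta))) with delta by ring.
  apply Rmult_le_reg_r with (2 * u * (1 + u)); [nra|].
  replace (delta / 2 * / u * (2 * u * (1 + u))) with (delta * (1 + u)) by (field; lra).
  replace (delta / (1 + u) * (2 * u * (1 + u))) with (delta * (2 * u)) by (field; lra).
  apply Rmult_le_compat_l; lra.
Qed.

Lemma log_plus_Rpower_supersolution (p beta : R) : 0 < p < 1 -> -1 < beta ->
  supersolution p (fun x => Rpower (log_plus x) (beta + 1)) (fun x => Rpower (log_plus x) beta).
Proof.
  intros Hp Hb.
  apply (log_plus_supersolution p beta 1 ((beta + 1) * ((1 - p) / 2) * Rpower (/ 2) (beta + 1))
           (2 * ((1 - p) / 2)) (fun u => Rpower u (beta + 1))); auto; try lra.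
  - apply Rmult_lt_0_compat; [nra | apply Rpower_pos].
  - intros a b Ha Hab. apply Rle_Rpower_l; lra.
  - intros u Hu. rewrite Rplus_comm. lra.
  - intros u Hu.
    pose proof (Rpower_sub_shift_ge (beta + 1) ((1 - p) / 2) u ltac:(lra) ltac:(lra) Hu) as H.
    replace (beta + 1 - 1) with beta in H by ring. lra.
Qed.

Lemma log_plus_neg_supersolution (p beta : R) : 0 < p < 1 -> beta < -1 ->
  supersolution p (fun x => 1 - Rpower (1 + log_plus x) (beta + 1))
                  (fun x => Rpower (log_plus x) beta).
Proof.
  intros Hp Hb.
  apply (log_plus_supersolution p beta (- beta) (- (beta + 1) * ((1 - p) / 2) * Rpower 2 beta) 1
           (fun u => 1 - Rpower (1 + u) (beta + 1))); auto; try lra.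
  - apply Rmult_lt_0_compat; [nra | apply Rpower_pos].
  - intros a b Ha Hab.
    pose proof (Rpower_le_anti_l (1 + a) (1 + b) (beta + 1) ltac:(lra) ltac:(lra)). lra.
  - intros u Hu. rewrite Rplus_opp_l, Rpower_0_r. pose proof (Rpower_pos (1 + u) (beta + 1)). lra.
  - intros u Hu.
    pose proof (Rpower_one_plus_shift_ge (beta + 1) ((1 - p) / 2) u ltac:(lra) ltac:(lra) Hu) as H.
    replace (beta + 1 - 1) with beta in H by ring. lra.
Qed.

Lemma one_sub_Rpower_one_plus_log_plus_bounds (gamma x : R) : gamma <= 0 -> 0 <= x ->
  0 <= 1 - Rpower (1 + log_plus x) gamma <= 1.
Proof.
  intros Hg Hx. pose proof (log_plus_nonneg x Hx) as HL.
  pose proof (Rpower_le_anti_l 1 (1 + log_plus x) gamma Hg ltac:(lra)) as H.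
  pose proof (Rpower_pos (1 + log_plus x) gamma). rewrite Rpower_1_l in H. lra.
Qed.

Lemma log_plus_log_plus_supersolution (p : R) : 0 < p < 1 ->
  supersolution p (fun x => log_plus (log_plus x)) (fun x => Rpower (log_plus x) (-1)).
Proof.
  intros Hp.
  apply (log_plus_supersolution p (-1) 2 ((1 - p) / 2 / 2) 1 log_plus); try lra.
  - intros a b Ha Hab. apply log_plus_le; lra.
  - intros u Hu. replace (2 + -1) with 1 by ring. rewrite Rpower_1 by lra.
    apply log_plus_le_self. lra.
  - intros u Hu. apply log_plus_shift_ge; lra.
Qed.

Lemma Rpower_log_plus_scale_le (c beta K : R) : 0 < c <= 1 -> 0 < K ->
  exists X, forall x, X <= x ->
    Rpower (log_plus (c * x)) beta <= exp K * Rpower (log_plus x) beta.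
Proof.
  intros Hc HK.
  assert (Hlnc : 0 <= - ln c)
    by (pose proof (ln_le c 1 ltac:(lra) ltac:(lra)) as H; rewrite ln_1 in H; lra).
  set (T := Rabs beta * (- ln c) / K).
  exists (Rmax 1 (exp T / c)). intros x Hx.
  pose proof (Rle_trans _ _ _ (Rmax_l _ _) Hx) as Hx1.
  pose proof (Rle_trans _ _ _ (Rmax_r _ _) Hx) as HxT.
  assert (HLT : T <= log_plus (c * x)).
  { apply log_plus_ge. apply Rmult_le_compat_l with (r := c) in HxT; [|lra].
    replace (c * (exp T / c)) with (exp T) in HxT by (field; lra). exact HxT. }
  assert (HL0 : 0 < log_plus (c * x)) by (apply log_plus_pos; nra).
  assert (HLle : log_plus (c * x) <= log_plus x) by (apply log_plus_le; nra).
  set (D := ln (log_plus x) - ln (log_plus (c * x))).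
  assert (HD0 : 0 <= D) by (pose proof (ln_le _ _ HL0 HLle); unfold D; lra).
  assert (HD : D <= - ln c / log_plus (c * x)).
  { pose proof (ln_sub_ge (log_plus x) (log_plus (c * x)) ltac:(lra) HL0).
    pose proof (log_plus_sub_scale_le c x Hc ltac:(lra)).
    assert ((log_plus x - log_plus (c * x)) / log_plus (c * x) <= - ln c / log_plus (c * x))
      by (apply Rmult_le_compat_r; [apply Rlt_le, Rinv_0_lt_compat|]; lra).
    unfold D, Rdiv in *. nra. }
  assert (HbD : Rabs beta * D <= K).
  { apply Rle_trans with (Rabs beta * (- ln c / log_plus (c * x))).
    - apply Rmult_le_compat_l; [apply Rabs_pos | exact HD].
    - apply Rmult_le_reg_r with (log_plus (c * x)); [exact HL0|].
      replace (Rabs beta * (- ln c / log_plus (c * x)) * log_plus (c * x))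
        with (Rabs beta * - ln c) by (field; lra).
      apply Rmult_le_compat_l with (r := K) in HLT; [|lra].
      replace (K * T) with (Rabs beta * - ln c) in HLT by (unfold T; field; lra). lra. }
  assert (- beta * D <= Rabs beta * D).
  { apply Rmult_le_compat_r; [exact HD0|]. rewrite <- Rabs_Ropp. apply Rle_abs. }
  unfold Rpower. rewrite <- exp_plus. apply exp_le. unfold D in *. lra.
Qed.

Lemma Rpower_mul_log_plus_scale_le (c alpha beta K : R) : 0 < c <= 1 -> 0 < K ->
  exists X, forall x, X <= x ->
    Rpower (c * x) alpha * Rpower (log_plus (c * x)) beta
      <= Rpower c alpha * exp K * (Rpower x alpha * Rpower (log_plus x) beta).
Proof.
  intros Hc HK. destruct (Rpower_log_plus_scale_le c beta K Hc HK) as [X HX].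
  exists (Rmax 1 X). intros x Hx.
  pose proof (Rle_trans _ _ _ (Rmax_l _ _) Hx) as Hx1.
  pose proof (Rle_trans _ _ _ (Rmax_r _ _) Hx) as HxX.
  rewrite <- Rpower_mult_distr by lra.
  replace (Rpower c alpha * exp K * (Rpower x alpha * Rpower (log_plus x) beta))
    with (Rpower c alpha * Rpower x alpha * (exp K * Rpower (log_plus x) beta)) by ring.
  apply Rmult_le_compat_l; [apply Rmult_le_pos; apply Rlt_le, Rpower_pos | now apply HX].
Qed.

(* The factor [x^alpha] shrinks by [p^alpha] under [x -> p x], while the
   logarithmic factor changes by a ratio tending to 1. *)
Lemma Rpower_mul_log_plus_supersolution (p alpha beta : R) : 0 < p < 1 -> 0 < alpha ->
  supersolution p (fun x => Rpower x alpha * Rpower (log_plus x) beta)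
                  (fun x => Rpower x alpha * Rpower (log_plus x) beta).
Proof.
  intros Hp Ha.
  assert (Hlnp : ln p < 0) by (rewrite <- ln_1; apply ln_increasing; lra).
  set (rho := Rpower p (alpha / 2)).
  assert (Hrho : 0 < rho < 1).
  { split; [apply Rpower_pos|]. rewrite <- exp_0. apply exp_increasing. nra. }
  assert (Hrho_eq : Rpower p alpha * exp (- (alpha / 2 * ln p)) = rho).
  { unfold rho, Rpower. rewrite <- exp_plus. f_equal. field. }
  assert (Hq3 : Rpower (1 - p) alpha * exp 1 <= 3).
  { assert (Rpower (1 - p) alpha <= 1)
      by (rewrite <- (Rpower_1_l alpha) at 2; apply Rle_Rpower_l; lra).
    pose proof exp_le_3. pose proof (exp_pos 1). pose proof (Rpower_pos (1 - p) alpha). nra. }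
  destruct (Rpower_mul_log_plus_scale_le p alpha beta (- (alpha / 2 * ln p))) as [Xp HXp];
    try nra.
  destruct (Rpower_mul_log_plus_scale_le (1 - p) alpha beta 1) as [Xq HXq]; try lra.
  destruct (exp_mul_Rpower_log_plus_small p 0 ((1 - rho) / 9)) as [Xe HXe]; try lra.
  exists ((1 - rho) / 3), (Rmax Xp (Rmax Xq Xe)). split; [lra|]. intros x Hx.
  pose proof (Rle_trans _ _ _ (Rmax_r _ _) Hx) as Hx'.
  specialize (HXp x (Rle_trans _ _ _ (Rmax_l _ _) Hx)).
  specialize (HXq x (Rle_trans _ _ _ (Rmax_l _ _) Hx')).
  specialize (HXe x (Rle_trans _ _ _ (Rmax_r _ _) Hx')).
  rewrite Rpower_0_r, Rmult_1_r in HXe. rewrite Hrho_eq in HXp.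
  set (hx := Rpower x alpha * Rpower (log_plus x) beta) in *.
  set (hq := Rpower ((1 - p) * x) alpha * Rpower (log_plus ((1 - p) * x)) beta) in *.
  assert (Hhx : 0 < hx) by (apply Rmult_lt_0_compat; apply Rpower_pos).
  assert (Hhq : hq <= 3 * hx) by (eapply Rle_trans; [exact HXq | nra]).
  assert (exp (- (p * x)) * hq <= (1 - rho) / 9 * (3 * hx)).
  { apply Rmult_le_compat; try lra; [apply Rlt_le, exp_pos|].
    apply Rmult_le_pos; apply Rlt_le, Rpower_pos. }
  assert (0 <= (1 - rho) * hx) by nra.
  lra.
Qed.

Lemma one_le_Rpower_mul_log_plus (alpha beta : R) : 0 < alpha ->
  exists X, forall x, X <= x -> 1 <= Rpower x alpha * Rpower (log_plus x) beta.
Proof.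
  intros Ha. destruct (Rpower_log_plus_le_Rpower alpha (- beta) Ha) as [X HX].
  exists X. intros x Hx.
  rewrite <- (Rpower_mul_opp (log_plus x) beta), (Rmult_comm (Rpower x alpha)).
  apply Rmult_le_compat_l; [apply Rlt_le, Rpower_pos | now apply HX].
Qed.

Lemma bigO_pinfty_refl (u : R -> R) : bigO_pinfty u u.
Proof. exists 1, 0. intros x _. lra. Qed.

Lemma bigO_pinfty_trans (u v w : R -> R) :
  bigO_pinfty u v -> bigO_pinfty v w -> bigO_pinfty u w.
Proof.
  intros [K [M Huv]] [K' [M' Hvw]]. exists (Rabs K * K'), (Rmax M M'). intros x Hx.
  specialize (Huv x (Rle_trans _ _ _ (Rmax_l _ _) Hx)).
  specialize (Hvw x (Rle_trans _ _ _ (Rmax_r _ _) Hx)).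
  assert (K * Rabs (v x) <= Rabs K * Rabs (v x))
    by (apply Rmult_le_compat_r; [apply Rabs_pos | apply Rle_abs]).
  assert (Rabs K * Rabs (v x) <= Rabs K * (K' * Rabs (w x)))
    by (apply Rmult_le_compat_l; [apply Rabs_pos | exact Hvw]).
  lra.
Qed.

Lemma Rpower_0_mul_log_plus_bigO (beta : R) :
  bigO_pinfty (fun x => Rpower x 0 * Rpower (log_plus x) beta)
              (fun x => Rpower (log_plus x) beta).
Proof. exists 1, 0. intros x _. rewrite Rpower_0_r, !Rmult_1_l. lra. Qed.

Lemma Rpower_mul_log_plus_bigO (alpha beta gamma : R) : alpha < 0 ->
  bigO_pinfty (fun x => Rpower x alpha * Rpower (log_plus x) beta)
              (fun x => Rpower (log_plus x) gamma).
Proof.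
  intros Ha. destruct (Rpower_log_plus_le_Rpower (- alpha) (beta - gamma)) as [X HX]; [lra|].
  exists 1, X. intros x Hx.
  rewrite Rmult_1_l, !Rabs_pos_eq by (try apply Rmult_le_pos; apply Rlt_le, Rpower_pos).
  replace beta with (beta - gamma + gamma) at 1 by ring.
  rewrite Rpower_plus, <- Rmult_assoc.
  rewrite <- (Rmult_1_l (Rpower (log_plus x) gamma)) at 2.
  apply Rmult_le_compat_r; [apply Rlt_le, Rpower_pos|].
  rewrite <- (Rpower_mul_opp x alpha).
  apply Rmult_le_compat_l; [apply Rlt_le, Rpower_pos | now apply HX].
Qed.

Section Comparison.

Variables (p : R) (F G h b : R -> R).
Hypothesis p_pos : 0 < p.
Hypothesis p_le_q : p <= 1 - p.
Hypothesis F_nonneg : forall x, 0 <= F x.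
Hypothesis F_rec : forall x, 0 <= x ->
  F x <= (1 - exp (- (p * x))) * F (p * x) + exp (- (p * x)) * F ((1 - p) * x) + G x.
Hypothesis F_bounded : forall Y, exists M, forall x, 0 <= x <= Y -> F x <= M.
Hypothesis h_nonneg : forall x, 0 <= x -> 0 <= h x.
Hypothesis b_nonneg : forall x, 0 <= b x.
Hypothesis G_bigO : bigO_pinfty G b.
Hypothesis h_super : supersolution p h b.

Lemma supersolution_step (A C r x : R) : 0 <= C -> 0 <= x ->
  G x <= C * (r * b x) ->
  h (p * x) + exp (- (p * x)) * h ((1 - p) * x) + r * b x <= h x ->
  F (p * x) <= A + C * h (p * x) -> F ((1 - p) * x) <= A + C * h ((1 - p) * x) ->
  F x <= A + C * h x.
Proof.
  intros HC Hx HG Hsuper Hpx Hqx.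
  assert (He : 0 < exp (- (p * x)) <= 1)
    by (split; [apply exp_pos | rewrite <- exp_0; apply exp_le; nra]).
  pose proof (Rmult_le_compat_l (1 - exp (- (p * x))) _ _ ltac:(lra) Hpx).
  pose proof (Rmult_le_compat_l (exp (- (p * x))) _ _ ltac:(lra) Hqx).
  pose proof (h_nonneg (p * x) ltac:(nra)).
  assert (0 <= C * (exp (- (p * x)) * h (p * x)))
    by (apply Rmult_le_pos; [|apply Rmult_le_pos]; lra).
  pose proof (Rmult_le_compat_l C _ _ HC Hsuper).
  pose proof (F_rec x Hx). lra.
Qed.

Lemma supersolution_comparison : exists A C, forall x, 0 <= x -> F x <= A + C * h x.
Proof.
  destruct G_bigO as [K [M HG]]. destruct h_super as [r [X [Hr Hsuper]]].
  pose proof (Rmax_l 1 (Rmax M X)). pose proof (Rmax_r 1 (Rmax M X)).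
  pose proof (Rmax_l M X). pose proof (Rmax_r M X).
  set (x1 := Rmax 1 (Rmax M X)) in *.
  destruct (F_bounded x1) as [A HA].
  set (C := Rabs K / r).
  assert (HC : 0 <= C) by (apply Rmult_le_pos; [apply Rabs_pos | now apply Rlt_le, Rinv_0_lt_compat]).
  assert (HGb : forall x, x1 <= x -> G x <= C * (r * b x)).
  { intros x Hx. specialize (HG x ltac:(lra)).
    replace (C * (r * b x)) with (Rabs K * b x) by (unfold C; field; lra).
    rewrite (Rabs_pos_eq (b x)) in HG by apply b_nonneg.
    pose proof (Rle_abs (G x)). pose proof (b_nonneg x).
    assert (K * b x <= Rabs K * b x) by (apply Rmult_le_compat_r; [lra | apply Rle_abs]).
    lra. }
  assert (Hbase : forall x, 0 <= x <= x1 -> F x <= A + C * h x).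
  { intros x Hx. pose proof (HA x Hx). pose proof (h_nonneg x (proj1 Hx)).
    assert (0 <= C * h x) by (now apply Rmult_le_pos). lra. }
  assert (Hind : forall n x, 0 <= x -> (1 - p) ^ n * x <= x1 -> F x <= A + C * h x).
  { induction n as [|n IH]; intros x Hx0 Hxn.
    - apply Hbase. simpl in Hxn. lra.
    - destruct (Rle_or_lt x x1) as [Hle | Hlt]; [now apply Hbase|].
      simpl in Hxn.
      assert (Hqn : 0 <= (1 - p) ^ n) by (apply pow_le; lra).
      apply (supersolution_step A C r x); try lra.
      + apply HGb. lra.
      + apply Hsuper. lra.
      + apply IH; nra.
      + apply IH; nra. }
  exists A, C. intros x Hx.
  destruct (pow_lt_1_zero (1 - p) ltac:(rewrite Rabs_pos_eq; lra) (x1 / (x + 1)))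
    as [N HN]; [apply Rdiv_lt_0_compat; lra|].
  specialize (HN N (le_n N)). rewrite Rabs_pos_eq in HN by (apply pow_le; lra).
  apply (Hind N x Hx).
  apply Rmult_lt_compat_r with (r := x + 1) in HN; [|lra].
  replace (x1 / (x + 1) * (x + 1)) with x1 in HN by (field; lra).
  pose proof (pow_le (1 - p) N ltac:(lra)). nra.
Qed.

Lemma supersolution_bigO (v : R -> R) :
  bigO_pinfty h v -> (exists X, forall x, X <= x -> 1 <= v x) -> bigO_pinfty F v.
Proof.
  intros [k [M Hh]] [X Hv]. destruct supersolution_comparison as [A [C HF]].
  exists (Rabs A + Rabs C * k), (Rmax 0 (Rmax M X)). intros x Hx.
  pose proof (Rle_trans _ _ _ (Rmax_l _ _) Hx) as Hx0.
  pose proof (Rle_trans _ _ _ (Rmax_r _ _) Hx) as Hx'.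
  specialize (Hh x (Rle_trans _ _ _ (Rmax_l _ _) Hx')).
  specialize (Hv x (Rle_trans _ _ _ (Rmax_r _ _) Hx')).
  specialize (HF x Hx0).
  rewrite (Rabs_pos_eq (F x)) by apply F_nonneg. rewrite (Rabs_pos_eq (v x)) by lra.
  rewrite (Rabs_pos_eq (v x)) in Hh by lra.
  assert (C * h x <= Rabs C * (k * v x)).
  { apply Rle_trans with (Rabs C * Rabs (h x)).
    - rewrite <- Rabs_mult. apply Rle_abs.
    - apply Rmult_le_compat_l; [apply Rabs_pos | exact Hh]. }
  assert (Rabs A <= Rabs A * v x) by (pose proof (Rabs_pos A); nra).
  pose proof (Rle_abs A). lra.
Qed.

End Comparison.

Lemma Cexp_opp_RtoC (a : R) : Cexp (- RtoC a)%C = RtoC (exp (- a)).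
Proof.
  rewrite <- RtoC_opp. unfold Cexp. rewrite re_RtoC, im_RtoC, cos_0, sin_0.
  unfold RtoC. f_equal; ring.
Qed.

Lemma Cmod_recurrence_le (p : R) (f g : C -> C) : 0 < p -> p <= 1 - p ->
  (forall z : C,
      f z = ((1 - Cexp (- (RtoC p * z))) * f (RtoC p * z)
             + Cexp (- (RtoC p * z)) * f (RtoC (1 - p) * z) + g z)%C) ->
  forall x, 0 <= x ->
  Cmod (f (RtoC x)) <= (1 - exp (- (p * x))) * Cmod (f (RtoC (p * x)))
     + exp (- (p * x)) * Cmod (f (RtoC ((1 - p) * x))) + Cmod (g (RtoC x)).
Proof.
  intros Hp Hpq Hf x Hx.
  rewrite (Hf (RtoC x)), <- !RtoC_mult, Cexp_opp_RtoC.
  assert (He : 0 < exp (- (p * x)) <= 1)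
    by (split; [apply exp_pos | rewrite <- exp_0; apply exp_le; nra]).
  eapply Rle_trans; [apply Cmod_triangle|]. apply Rplus_le_compat_r.
  eapply Rle_trans; [apply Cmod_triangle|].
  rewrite !Cmod_mult, <- RtoC_minus, !Cmod_R, !Rabs_pos_eq by lra.
  lra.
Qed.

Lemma RtoC_continuous (x : R) :
  filterlim RtoC (locally x) (@locally (AbsRing_UniformSpace C_AbsRing) (RtoC x)).
Proof.
  apply (proj2 (@filterlim_locally R (AbsRing_UniformSpace C_AbsRing) (locally x) _ RtoC (RtoC x))).
  intros eps. exists eps. intros y Hy.
  change (Cmod (RtoC y - RtoC x)%C < eps).
  rewrite <- RtoC_minus, Cmod_R. exact Hy.
Qed.

Lemma entire_Cmod_bounded (f : C -> C) : entire f ->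
  forall Y, exists M, forall x, 0 <= x <= Y -> Cmod (f (RtoC x)) <= M.
Proof.
  intros Hf Y.
  destruct (bounded_continuity (V := R_NormedModule) (fun x => Cmod (f (RtoC x))) 0 Y) as [M HM].
  - intros x _.
    apply (filterlim_comp _ _ _ (fun x => f (RtoC x)) Cmod _ (@locally C_NormedModule (f (RtoC x)))).
    + eapply filterlim_comp; [apply RtoC_continuous | exact (ex_derive_continuous f _ (Hf _))].
    + exact (filterlim_norm (K := C_AbsRing) (V := C_NormedModule) (f (RtoC x))).
  - exists M. intros x Hx. apply Rlt_le. eapply Rle_lt_trans; [apply Rle_abs | exact (HM x Hx)].
Qed.

Section Recurrence.

Variables (p : R) (f g : C -> C).
Hypothesis p_pos : 0 < p.
Hypothesis p_le_q : p <= 1 - p.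
Hypothesis f_entire : entire f.
Hypothesis f_rec : forall z : C,
  f z = ((1 - Cexp (- (RtoC p * z))) * f (RtoC p * z)
         + Cexp (- (RtoC p * z)) * f (RtoC (1 - p) * z) + g z)%C.

Lemma recurrence_bigO (h b v : R -> R) :
  supersolution p h b -> bigO_pinfty (fun x => Cmod (g (RtoC x))) b ->
  (forall x, 0 <= b x) -> (forall x, 0 <= x -> 0 <= h x) ->
  bigO_pinfty h v -> (exists X, forall x, X <= x -> 1 <= v x) ->
  bigO_pinfty (fun x => Cmod (f (RtoC x))) v.
Proof.
  intros Hsuper HgO Hb Hh.
  apply (supersolution_bigO p _ _ h b p_pos p_le_q (fun x => Cmod_ge_0 _)
           (Cmod_recurrence_le p f g p_pos p_le_q f_rec) (entire_Cmod_bounded f f_entire));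
    assumption.
Qed.

Lemma recurrence_bigO_Rpower_mul (alpha beta : R) : 0 < alpha ->
  bigO_pinfty (fun x => Cmod (g (RtoC x))) (fun x => Rpower x alpha * Rpower (log_plus x) beta) ->
  bigO_pinfty (fun x => Cmod (f (RtoC x))) (fun x => Rpower x alpha * Rpower (log_plus x) beta).
Proof.
  intros Ha HgO.
  assert (Hpos : forall x, 0 <= Rpower x alpha * Rpower (log_plus x) beta)
    by (intros x; apply Rlt_le, Rmult_lt_0_compat; apply Rpower_pos).
  exact (recurrence_bigO _ _ _ (Rpower_mul_log_plus_supersolution p alpha beta
           ltac:(lra) Ha) HgO Hpos (fun x _ => Hpos x) (bigO_pinfty_refl _)
           (one_le_Rpower_mul_log_plus alpha beta Ha)).
Qed.

Lemma recurrence_bigO_log_plus_Rpower (beta : R) : -1 < beta ->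
  bigO_pinfty (fun x => Cmod (g (RtoC x))) (fun x => Rpower (log_plus x) beta) ->
  bigO_pinfty (fun x => Cmod (f (RtoC x))) (fun x => Rpower (log_plus x) (beta + 1)).
Proof.
  intros Hb HgO.
  apply (recurrence_bigO _ _ _ (log_plus_Rpower_supersolution p beta ltac:(lra) Hb) HgO
           (fun x => Rlt_le _ _ (Rpower_pos _ _)) (fun x _ => Rlt_le _ _ (Rpower_pos _ _))
           (bigO_pinfty_refl _)).
  exists (exp 1). intros x Hx. apply one_le_Rpower; [now apply log_plus_ge | lra].
Qed.

Lemma recurrence_bigO_log_plus_log_plus :
  bigO_pinfty (fun x => Cmod (g (RtoC x))) (fun x => Rpower (log_plus x) (-1)) ->
  bigO_pinfty (fun x => Cmod (f (RtoC x))) (fun x => log_plus (log_plus x)).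
Proof.
  intros HgO.
  apply (recurrence_bigO _ _ _ (log_plus_log_plus_supersolution p ltac:(lra)) HgO
           (fun x => Rlt_le _ _ (Rpower_pos _ _))).
  - intros x Hx. apply log_plus_nonneg, log_plus_nonneg, Hx.
  - apply bigO_pinfty_refl.
  - exists (exp (exp 1)). intros x Hx. apply log_plus_ge, log_plus_ge, Hx.
Qed.

Lemma recurrence_bigO_1 (beta : R) : beta < -1 ->
  bigO_pinfty (fun x => Cmod (g (RtoC x))) (fun x => Rpower (log_plus x) beta) ->
  bigO_pinfty (fun x => Cmod (f (RtoC x))) (fun _ => 1).
Proof.
  intros Hb HgO.
  apply (recurrence_bigO _ _ _ (log_plus_neg_supersolution p beta ltac:(lra) Hb) HgO
           (fun x => Rlt_le _ _ (Rpower_pos _ _))).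
  - intros x Hx. apply one_sub_Rpower_one_plus_log_plus_bounds; lra.
  - exists 1, 0. intros x Hx.
    pose proof (one_sub_Rpower_one_plus_log_plus_bounds (beta + 1) x ltac:(lra) Hx).
    rewrite Rabs_R1, Rabs_pos_eq; lra.
  - exists 0. intros. lra.
Qed.

End Recurrence.

Theorem mainTheorem9 (p : R) (f g : C -> C) (alpha beta : R) :
  0 < p -> p <= 1 - p ->
  entire f -> entire g ->
  (forall z : C,
      f z = ((1 - Cexp (- (RtoC p * z))) * f (RtoC p * z)
             + Cexp (- (RtoC p * z)) * f (RtoC (1 - p) * z) + g z)%C) ->
  f 0%C = 0%C -> g 0%C = 0%C ->
  bigO_pinfty (fun x => Cmod (g (RtoC x)))
              (fun x => Rpower x alpha * Rpower (log_plus x) beta) ->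
  let F := fun x => Cmod (f (RtoC x)) in
  (0 < alpha ->
     bigO_pinfty F (fun x => Rpower x alpha * Rpower (log_plus x) beta)) /\
  (alpha = 0 -> -1 < beta ->
     bigO_pinfty F (fun x => Rpower (log_plus x) (beta + 1))) /\
  (alpha = 0 -> beta = -1 ->
     bigO_pinfty F (fun x => log_plus (log_plus x))) /\
  (alpha = 0 -> beta < -1 -> bigO_pinfty F (fun _ => 1)) /\
  (alpha < 0 -> bigO_pinfty F (fun _ => 1)).
Proof.
  intros Hp Hpq Hf _ Hrec _ _ HgO F.
  assert (Hlog : alpha = 0 ->
            bigO_pinfty (fun x => Cmod (g (RtoC x))) (fun x => Rpower (log_plus x) beta))
    by (intros ->; exact (bigO_pinfty_trans _ _ _ HgO (Rpower_0_mul_log_plus_bigO beta))).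
  repeat split.
  - intros Ha. exact (recurrence_bigO_Rpower_mul p f g Hp Hpq Hf Hrec alpha beta Ha HgO).
  - intros Ha Hb. exact (recurrence_bigO_log_plus_Rpower p f g Hp Hpq Hf Hrec beta Hb (Hlog Ha)).
  - intros Ha ->. exact (recurrence_bigO_log_plus_log_plus p f g Hp Hpq Hf Hrec (Hlog Ha)).
  - intros Ha Hb. exact (recurrence_bigO_1 p f g Hp Hpq Hf Hrec beta Hb (Hlog Ha)).
  - intros Ha. apply (recurrence_bigO_1 p f g Hp Hpq Hf Hrec (-2)); [lra|].
    exact (bigO_pinfty_trans _ _ _ HgO (Rpower_mul_log_plus_bigO alpha beta (-2) Ha)).
Qed.
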